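(* Let $\phi_1,\ldots,\phi_N\in\mathbb{R}^D$, $\Phi=(\phi_1,\ldots,\phi_N)\in\mathbb{R}^{D\times N}$, $t\in\{0,1\}^N$, $\sigma(a)=1/(1+e^{-a})$, $y(\theta)=(\sigma(\theta^{\rm T}\phi_n))_{n=1}^N$, and $\Psi_{\rm data}(\theta)=-\sum_{n=1}^N\{t_n\ln y_n(\theta)+(1-t_n)\ln(1-y_n(\theta))\}$. For an ensemble $\theta^{(1)},\ldots,\theta^{(M)}\in\mathbb{R}^D$ let $\hat m=\frac1M\sum_j\theta^{(j)}$, $\hat\Sigma=\frac1{M-1}\sum_j(\theta^{(j)}-\hat m)(\theta^{(j)}-\hat m)^{\rm T}$, and $$\Psi_{\rm KBF}(\theta^{(1)},\ldots,\theta^{(M)})=\frac12\sum_{j=1}^M\Psi_{\rm data}(\theta^{(j)})+\frac M2\Psi_{\rm data}\Big(\frac1M\sum_{j=1}^M\theta^{(j)}\Big).$$ Then the EnKBF equations $$\frac{\rm d}{{\rm d}\tau}\theta^{(i)}_\tau=-\frac12\hat\Sigma_\tau\Phi\big(y(\theta^{(i)}_\tau)+y(\hat m_\tau)-2t\big),\qquad i=1,\ldots,M,$$ have the gradient structure $$\frac{\rm d}{{\rm d}\tau}\theta^{(i)}_\tau=-\hat\Sigma_\tau\nabla_{\theta^{(i)}}\Psi_{\rm KBF}(\theta^{(1)}_\tau,\ldots,\theta^{(M)}_\tau),\qquad i=1,\ldots,M,$$ where $\nabla_{\theta^{(i)}}$ denotes the gradient with respect to the $i$-th argument (the mean $\hat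 m$ inside $\Psi_{\rm KBF}$ being regarded as a function of the ensemble). *)

From HB Require Import structures.
From mathcomp Require Import all_boot all_order all_algebra.
From mathcomp Require Import all_classical all_reals all_analysis.
Set Implicit Arguments. Unset Strict Implicit. Unset Printing Implicit Defensive.
Import Order.TTheory GRing.Theory Num.Theory.
Import numFieldNormedType.Exports.
Local Open Scope ring_scope.

Section Defs.
Variables (R : realType) (D N M : nat).

Definition sigmoid (a : R) : R := 1 / (1 + expR (- a)).

Definition yvec (Phi : 'M[R]_(D, N)) (th : 'cV[R]_D) : 'cV[R]_N :=
  \col_n sigmoid ((th^T *m col n Phi) 0 0).

Definition Psi_data (Phi : 'M[R]_(D, N)) (t : 'cV[R]_N) (th : 'cV[R]_D) : R :=
  - \sum_(n < N) (t n 0 * ln (yvec Phi th n 0)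
                  + (1 - t n 0) * ln (1 - yvec Phi th n 0)).

Definition ens_mean (ens : 'I_M -> 'cV[R]_D) : 'cV[R]_D :=
  (M%:R)^-1 *: \sum_(j < M) ens j.

Definition ens_cov (ens : 'I_M -> 'cV[R]_D) : 'M[R]_D :=
  ((M%:R - 1)^-1) *: \sum_(j < M) ((ens j - ens_mean ens) *m (ens j - ens_mean ens)^T).

Definition Psi_KBF (Phi : 'M[R]_(D, N)) (t : 'cV[R]_N) (ens : 'I_M -> 'cV[R]_D) : R :=
  2^-1 * \sum_(j < M) Psi_data Phi t (ens j)
  + (M%:R / 2) * Psi_data Phi t ((M%:R)^-1 *: \sum_(j < M) ens j).

Definition EnKBF_rhs (Phi : 'M[R]_(D, N)) (t : 'cV[R]_N) (ens : 'I_M -> 'cV[R]_D)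
  (i : 'I_M) : 'cV[R]_D :=
  - (2^-1) *: (ens_cov ens *m Phi *m
       (yvec Phi (ens i) + yvec Phi (ens_mean ens) - 2 *: t)).

Definition ens_upd (ens : 'I_M -> 'cV[R]_D) (i : 'I_M) (th : 'cV[R]_D) : 'I_M -> 'cV[R]_D :=
  fun j => if j == i then th else ens j.

Definition partial_fun (f : 'cV[R]_D -> R) (x : 'cV[R]_D) (d : 'I_D) : R -> R :=
  fun s => f (x + s *: delta_mx d 0).

Definition grad (f : 'cV[R]_D -> R) (x : 'cV[R]_D) : 'cV[R]_D :=
  \col_d derive1 (partial_fun f x d) 0.

End Defs.

(** The logistic loss [l_c(a) = (1 - c) a + ln (1 + e^(-a))] of a single
    observation has derivative [sigma(a) - c], so by the chain rule along
    lines the gradient of [Psi_data] is [Phi (y(theta) - t)].  Replacing the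
    [i]-th particle by [theta] moves the ensemble mean by [(theta - theta_i)/M],
    so the second term of [Psi_KBF] contributes [(M/2) (1/M) Phi (y(m) - t)]
    and the gradient in the [i]-th argument is
    [Phi (y(theta_i) + y(m) - 2t) / 2]; multiplying by [-Sigma] gives the
    EnKBF vector field. *)
From HB Require Import structures.
From mathcomp Require Import all_boot all_order all_algebra.
From mathcomp Require Import all_classical all_reals all_analysis.
From mathcomp Require Import ring.
Import Order.TTheory GRing.Theory Num.Theory.
Import numFieldNormedType.Exports.
Local Open Scope ring_scope.

Set Implicit Arguments.
Unset Strict Implicit.

Section LogisticLoss.
Variable R : realType.

Definition logloss (c a : R) : R := (1 - c) * a + ln (1 + expR (- a)).

Lemma onem_sigmoid (a : R) : 1 - sigmoid a = expR (- a) / (1 + expR (- a)).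
Proof.
have ? : 1 + expR (- a) != 0 by rewrite gt_eqF // addr_gt0 // expR_gt0.
by rewrite /sigmoid; field.
Qed.

Lemma logloss_sigmoid (c a : R) :
  - (c * ln (sigmoid a) + (1 - c) * ln (1 - sigmoid a)) = logloss c a.
Proof.
have pos : 0 < 1 + expR (- a) by rewrite addr_gt0 // expR_gt0.
rewrite onem_sigmoid /sigmoid div1r lnM ?posrE ?invr_gt0 ?expR_gt0 //.
by rewrite expRK lnV ?posrE // /logloss; ring.
Qed.

Lemma is_derive_logloss (c a : R) : is_derive a 1 (logloss c) (sigmoid a - c).
Proof.
have pos : 0 < 1 + expR (- a) by rewrite addr_gt0 // expR_gt0.
have dexp := is_derive1_comp (is_derive_expR (- a)) (is_deriveN (is_derive_id a 1)).
have dlog := @is_derive1_comp _ (@ln R) (fun x => 1 + expR (- x)) _ _ _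
  (is_derive1_ln pos) (is_deriveD (is_derive_cst (1 : R) a 1) dexp).
apply: is_derive_eq (is_deriveD (is_deriveZ (1 - c) (is_derive_id a 1)) dlog) _.
by rewrite /GRing.scale /= add0r mulr1 mulrN1 mulrN [_^-1 * _]mulrC -onem_sigmoid; ring.
Qed.

Lemma is_derive_affine_comp (f : R -> R) (a b df : R) :
  is_derive a 1 f df -> is_derive (0 : R) 1 (fun s => f (a + s * b)) (b * df).
Proof.
move=> fa.
have daff : is_derive (0 : R) 1 (fun s => a + s * b) b.
  apply: is_derive_eq
    (is_deriveD (is_derive_cst a (0 : R) 1)
      (is_deriveM (is_derive_id (0 : R) 1) (is_derive_cst b (0 : R) 1))) _.
  by rewrite /GRing.scale /= mulr1 mulr0 !add0r.
rewrite -[X in is_derive X](addr0 a) -[X in a + X](mul0r b) in fa.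
by rewrite mulrC; exact: (@is_derive1_comp _ f (fun s => a + s * b) 0 _ _ fa daff).
Qed.

End LogisticLoss.

Section DataMisfit.
Variables (R : realType) (D N : nat) (Phi : 'M[R]_(D, N)) (t : 'cV[R]_N).

Lemma yvecE (th : 'cV[R]_D) : yvec Phi th = map_mx (@sigmoid R) (Phi^T *m th).
Proof.
apply/matrixP => n j; rewrite ord1 !mxE; congr sigmoid.
by apply: eq_bigr => d _; rewrite !mxE mulrC.
Qed.

Lemma Psi_dataE th :
  Psi_data Phi t th = \sum_(n < N) logloss (t n 0) ((Phi^T *m th) n 0).
Proof.
rewrite /Psi_data -sumrN; apply: eq_bigr => n _.
by rewrite yvecE mxE logloss_sigmoid.
Qed.

Lemma is_derive_Psi_data_line (x v : 'cV[R]_D) :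
  is_derive (0 : R) 1 (fun s => Psi_data Phi t (x + s *: v))
    ((v^T *m (Phi *m (yvec Phi x - t))) 0 0).
Proof.
have -> : (fun s => Psi_data Phi t (x + s *: v)) = \sum_(n < N)
    (fun s => logloss (t n 0) ((Phi^T *m x) n 0 + s * (Phi^T *m v) n 0)).
  apply/funext => s; rewrite fct_sumE Psi_dataE; apply: eq_bigr => n _.
  by rewrite mulmxDr -scalemxAr !mxE.
apply: is_derive_eq (is_derive_sum (fun n => is_derive_affine_comp _ (is_derive_logloss _ _))) _.
rewrite mulmxA -[v^T *m Phi]trmxK trmx_mul [v^T^T]trmxK mxE.
by apply: eq_bigr => n _; rewrite yvecE !mxE.
Qed.

End DataMisfit.

Section Gradient.
Variables (R : realType) (D : nat).

Lemma grad_directional (f : 'cV[R]_D -> R) (x g : 'cV[R]_D) :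
  (forall v, is_derive (0 : R) 1 (fun s => f (x + s *: v)) ((v^T *m g) 0 0)) ->
  grad f x = g.
Proof.
move=> dfg; apply/matrixP => d j; rewrite ord1 mxE derive1E.
by rewrite (@derive_val _ _ _ _ _ _ _ (dfg (delta_mx d 0))) trmx_delta -rowE mxE.
Qed.

End Gradient.

Section EnsembleUpdate.
Variables (R : realType) (D M : nat) (ens : 'I_M -> 'cV[R]_D) (i : 'I_M).

Lemma sum_ens_upd (V : zmodType) (F : 'cV[R]_D -> V) (th : 'cV[R]_D) :
  \sum_(j < M) F (ens_upd ens i th j) = \sum_(j < M) F (ens j) + (F th - F (ens i)).
Proof.
rewrite (bigD1 i) //= [in RHS](bigD1 i) //= /ens_upd eqxx.
rewrite (eq_bigr (fun j => F (ens j))) => [|j /negbTE ->//].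
by rewrite addrAC addrCA subrr addr0 addrC.
Qed.

Lemma ens_mean_upd (th : 'cV[R]_D) :
  ens_mean (ens_upd ens i th) = ens_mean ens + M%:R^-1 *: (th - ens i).
Proof. by rewrite /ens_mean (sum_ens_upd id) scalerDr. Qed.

End EnsembleUpdate.

Section KBFGradient.
Variables (R : realType) (D N M : nat) (Phi : 'M[R]_(D, N)) (t : 'cV[R]_N).
Variables (ens : 'I_M -> 'cV[R]_D) (i : 'I_M).

Lemma Psi_KBF_upd (th : 'cV[R]_D) :
  Psi_KBF Phi t (ens_upd ens i th) =
    2^-1 * (\sum_(j < M) Psi_data Phi t (ens j) - Psi_data Phi t (ens i))
    + 2^-1 * Psi_data Phi t th
    + M%:R / 2 * Psi_data Phi t (ens_mean ens + M%:R^-1 *: (th - ens i)).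
Proof.
rewrite /Psi_KBF -[_ *: \sum_(j < M) _]/(ens_mean _) ens_mean_upd.
rewrite [in LHS](sum_ens_upd ens i (Psi_data Phi t) th).
by rewrite addrCA mulrDr [2^-1 * Psi_data Phi t th + _]addrC.
Qed.

Lemma is_derive_Psi_KBF_upd (M_gt0 : (0 < M)%N) (v : 'cV[R]_D) :
  is_derive (0 : R) 1 (fun s => Psi_KBF Phi t (ens_upd ens i (ens i + s *: v)))
    ((v^T *m (2^-1 *: (Phi *m (yvec Phi (ens i) + yvec Phi (ens_mean ens) - 2 *: t)))) 0 0).
Proof.
have M_neq0 : M%:R != 0 :> R by rewrite pnatr_eq0 -lt0n.
pose C := 2^-1 * (\sum_(j < M) Psi_data Phi t (ens j) - Psi_data Phi t (ens i)).
have -> : (fun s => Psi_KBF Phi t (ens_upd ens i (ens i + s *: v))) =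
    cst C + 2^-1 \*: (fun s => Psi_data Phi t (ens i + s *: v))
    + (M%:R / 2) \*: (fun s => Psi_data Phi t (ens_mean ens + s *: (M%:R^-1 *: v))).
  apply/funext => s; rewrite Psi_KBF_upd (addrAC (ens i)) (subrr (ens i)) add0r.
  by rewrite scalerA [_^-1 * s]mulrC -scalerA.
apply: is_derive_eq (is_deriveD (is_deriveD (is_derive_cst C _ _)
  (is_deriveZ _ (is_derive_Psi_data_line _ _ _ _)))
  (is_deriveZ _ (is_derive_Psi_data_line _ _ _ _))) _.
have -> : yvec Phi (ens i) + yvec Phi (ens_mean ens) - 2 *: t
    = (yvec Phi (ens i) - t) + (yvec Phi (ens_mean ens) - t).
  by rewrite scaler_nat mulr2n opprD addrACA.
rewrite linearZ /= -scalemxAl (mulmxDr Phi (_ - _)) scalerDr (mulmxDr v^T) -!scalemxAr.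
rewrite !mxE /GRing.scale /= add0r.
by rewrite [M%:R / 2 * _]mulrA [M%:R / 2 * _]mulrAC mulfV ?mul1r.
Qed.

End KBFGradient.

Unset Implicit Arguments.

Theorem mainTheorem4 (R : realType) (D N M : nat) (hM : (2 <= M)%N)
  (Phi : 'M[R]_(D, N)) (t : 'cV[R]_N)
  (ht : forall n : 'I_N, t n 0 = 0 \/ t n 0 = 1)
  (ens : 'I_M -> 'cV[R]_D) (i : 'I_M) :
  (forall d : 'I_D,
     derivable (partial_fun (fun th => Psi_KBF Phi t (ens_upd ens i th)) (ens i) d) 0 1)
  /\ EnKBF_rhs Phi t ens i
     = - (ens_cov ens *m grad (fun th => Psi_KBF Phi t (ens_upd ens i th)) (ens i)).
Proof.
have dPsi v := is_derive_Psi_KBF_upd Phi t ens i (ltnW hM) v.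
split=> [d|]; first by case: (dPsi (delta_mx d 0)).
rewrite (grad_directional dPsi) /EnKBF_rhs.
by rewrite -scalemxAr mulmxA scaleNr.
Qed.
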